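(* Let $G$ be a finite group of odd order. (1) If $G'\cong C_{15}$, then $G'\subseteq Z(G)$. (2) If $G'\cong C_{21}$ and $G'\not\subseteq Z(G)$, then $|G/C_G(G')|=|G'\cap Z(G)|=3$, and exactly one of the following holds: (i) $|\mathrm{Cl}_G(x)|=21$ for all $x\in G\setminus C_G(G')$; (ii) there is a subset $X\subseteq G\setminus C_G(G')$ with $|X|=2|Z(C_G(G'))|$ such that $|\mathrm{Cl}_G(x)|=7$ for $x\in X$ and $|\mathrm{Cl}_G(x)|=21$ for $x\in G\setminus (C_G(G')\cup X)$.
   Context: $G'$ is the commutator subgroup, $Z(\cdot)$ the center, $C_G(G')$ the centralizer of $G'$ in $G$, $\mathrm{Cl}_G(x)$ the conjugacy class of $x$, and $C_n$ the cyclic group of order $n$. *)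

From mathcomp Require Import all_boot.

From mathcomp Require Import all_boot fingroup morphism quotient commutator center cyclic.
From mathcomp Require Import automorphism.
Import GroupScope.

Set Implicit Arguments.
Unset Strict Implicit.
Unset Printing Implicit Defensive.

(* G / C_G(H) embeds in Aut(H), of order phi(|H|) for H cyclic; with |G| odd
   this index is 1 for |H| = 3 or 15 (phi = 2, 8) and 1 or 3 for |H| = 21.
   Let |G'| = 21 = #[y] and C = C_G(G') of index 3.  For x outside C we have
   G = <x>C, so x^G = x^C = {x[x,c] | c in C}, and c |-> [x,c] is a morphism
   C -> G' whose image contains [x,y], of order 7 since y^7 is central; hence
   |x^G| is 7 or 21, and it is 7 iff every [x,c]^7 = 1.  By the three subgroups
   lemma C' <= Z(G) n G', of order 3, so [xd,c]^7 = [d,c] for d, c in C: when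
   |x^G| = 7, the elements of class size 7 are exactly xZ(C) u x^-1 Z(C). *)

Lemma card_quotient_cent_odd (gT : finGroupType) (G H : {group gT}) :
  odd #|G| -> cyclic H -> G \subset 'N(H) ->
  #|G / 'C_G(H)| \in [seq d <- divisors (totient #|H|) | odd d].
Proof.
move=> oddG cycH nHG.
have nCG : G \subset 'N('C_G(H)) by rewrite normsI ?normG ?norms_cent.
have dvd_tot : #|G / 'C_G(H)| %| totient #|H|.
  rewrite -ker_conj_aut (card_isog (first_isog_loc _ _)) //.
  by rewrite -card_Aut_cyclic // cardSg ?Aut_conj_aut.
rewrite mem_filter -dvdn_divisors ?totient_gt0 // dvd_tot andbT.
by rewrite (dvdn_odd _ oddG) // card_quotient // dvdn_indexg.
Qed.

Lemma cents_card_quotient_cent (gT : finGroupType) (G H : {group gT}) :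
  G \subset 'N(H) -> (G \subset 'C(H)) = (#|G / 'C_G(H)| == 1%N).
Proof.
move=> nHG; have nCG : G \subset 'N('C_G(H)) by rewrite normsI ?normG ?norms_cent.
by rewrite -trivg_card1 -subG1 quotient_sub1 // subsetI subxx.
Qed.

Lemma odd_cyclic_normal_center (gT : finGroupType) (G H : {group gT}) :
  odd #|G| -> cyclic H -> H <| G ->
  [seq d <- divisors (totient #|H|) | odd d] = [:: 1%N] -> H \subset 'Z(G).
Proof.
move=> oddG cycH /andP[sHG nHG] odd_tot.
have := card_quotient_cent_odd oddG cycH nHG.
by rewrite odd_tot inE -(cents_card_quotient_cent nHG) subsetI sHG centsC.
Qed.

Lemma der1_sub_center (gT : finGroupType) (G H : {group gT}) :
  H \subset G -> H \subset 'C(G^`(1)) -> H^`(1) \subset 'Z(G).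
Proof.
move=> sHG cDH; rewrite subsetI (subset_trans (dergS 1 sHG)) ?der_sub //=.
have sHG_der : [~: H, G] \subset G^`(1) by rewrite derg1 commgSS.
have sGH_der : [~: G, H] \subset G^`(1) by rewrite derg1 commgSS.
apply/commG1P; rewrite derg1 (three_subgroup (G := H) (H := G) (K := H)) //.
- by apply/commG1P; rewrite centsC (subset_trans cDH) ?centS.
- by apply/commG1P; rewrite centsC (subset_trans cDH) ?centS.
Qed.

Lemma commg_morph_cent (gT : finGroupType) (x : gT) (C D : {set gT}) :
  abelian D -> C \subset 'C(D) -> {in C, forall c, [~ x, c] \in D} ->
  {in C &, {morph commg x : c d / c * d}}.
Proof.
move=> abD cDC xCD c d Cc Cd /=; rewrite commgMJ.
have /conjg_fixP-> : [~ [~ x, c], d] == 1.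
  by apply/commgP/commute_sym/(centsP cDC); rewrite ?xCD.
by apply: (centsP abD); rewrite ?xCD.
Qed.

Section IndexThree.

Variables (gT : finGroupType) (G C : {group gT}).
Hypotheses (nsCG : C <| G) (oGC : #|G / C| = 3).

Lemma index3_expg3 x : x \in G -> x ^+ 3 \in C.
Proof.
move=> Gx; have Nx := subsetP (normal_norm nsCG) x Gx.
apply: coset_idr; first by rewrite groupX.
by rewrite morphX // -oGC expg_cardG // mem_quotient.
Qed.

Lemma index3_cosets x g : x \in G -> x \notin C -> g \in G ->
  [\/ g \in C, x^-1 * g \in C | x * g \in C].
Proof.
move=> Gx notCx Gg; have nCG := normal_norm nsCG.
have [Nx Ng] := (subsetP nCG x Gx, subsetP nCG g Gg).
have ox : #[coset C x] = 3.
  have : #[coset C x] %| 3 by rewrite -oGC order_dvdG ?mem_quotient.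
  apply: (prime_nt_dvdP _ _) => //; apply: contra notCx; rewrite order_eq1.
  by move/eqP/coset_idr; apply.
have defQ : <[coset C x]> = G / C.
  by apply/eqP; rewrite eqEcard cycle_subG mem_quotient //= oGC -orderE ox.
have /cycleP[k def_xg] : coset C g \in <[coset C x]> by rewrite defQ mem_quotient.
have Cxkg : x ^- (k %% 3) * g \in C.
  apply: coset_idr; first by rewrite groupM ?groupV ?groupX.
  rewrite morphM ?groupV ?groupX // morphV ?groupX // morphX //.
  by rewrite -ox expg_mod_order -def_xg mulVg.
move: (ltn_mod k 3) Cxkg; case: (k %% 3) => [|[|[|//]]] _ /=.
- by rewrite invg1 mul1g; constructor 1.
- by constructor 2.
- move=> Cx2g; constructor 3.
  have -> : x * g = x ^+ 3 * (x ^- 2 * g) by rewrite expgS -mulgA mulKVg.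
  by rewrite groupM ?index3_expg3.
Qed.

Lemma index3_mulg_cent x g : x \in G -> x \notin C -> x^-1 * g \in C -> x * g \notin C.
Proof.
move=> Gx notCx Cxg; apply: contra notCx => Cx'g.
have C_x2 : x ^+ 2 \in C.
  have -> : x ^+ 2 = (x * g) * (x^-1 * g)^-1 by rewrite invMg invgK mulgA mulgK expg2.
  by rewrite groupM ?groupV.
have -> : x = x ^+ 3 * (x ^+ 2)^-1 by rewrite expgS mulgK.
by rewrite groupM ?groupV ?index3_expg3.
Qed.

Lemma index3_class x : x \in G -> x \notin C -> x ^: G = x ^: C.
Proof.
move=> Gx notCx; apply/eqP; rewrite eqEsubset (imsetS _ (normal_sub nsCG)) andbT.
apply/subsetP=> _ /imsetP[g Gg ->].
have xx : x ^ x = x by rewrite conjgE mulKg.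
have xx' : x ^ x^-1 = x by rewrite conjgE invgK mulgV mulg1.
have [Cg | Cxg | Cxg] := index3_cosets Gx notCx Gg.
- exact: imset_f.
- by rewrite -(mulKVg x g) conjgM xx imset_f.
- by rewrite -(mulKg x g) conjgM xx' imset_f.
Qed.

Lemma index3_card_class x : x \in G -> x \notin C ->
  #|x ^: G| = #|[set [~ x, c] | c in C]|.
Proof.
move=> Gx notCx; rewrite index3_class // -[RHS](card_imset _ (mulgI x)) -imset_comp.
suff -> : x ^: C = [set x * [~ x, c] | c in C] by [].
by apply: eq_imset => c /=; rewrite conjg_mulR.
Qed.

End IndexThree.

Section DerivedCyclic21.

Variables (gT : finGroupType) (G : {group gT}) (y : gT).
Hypotheses (oddG : odd #|G|) (defD : G^`(1) = <[y]>) (oy : #[y] = 21).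
Hypothesis notcentD : ~~ (G^`(1) \subset 'Z(G)).

Local Notation D := G^`(1).
Local Notation C := 'C_G(G^`(1)).

Let cardD : #|D| = 21. Proof. by rewrite defD -orderE. Qed.
Let cycD : cyclic D. Proof. by rewrite defD cycle_cyclic. Qed.
Let Dy : y \in D. Proof. by rewrite defD cycle_id. Qed.

Let sCG : C \subset G := subsetIl _ _.
Let cDC : C \subset 'C(D) := subsetIr _ _.

Let mem_commg_der a b : a \in G -> b \in G -> [~ a, b] \in D.
Proof. by move=> Ga Gb; rewrite derg1 mem_commg. Qed.

Lemma normal_cent_der : C <| G.
Proof. by have := subcent_normal G D; rewrite (setIidPl (der_norm 1 G)). Qed.

Lemma index_cent_der : #|G / C| = 3.
Proof.
have := card_quotient_cent_odd oddG cycD (der_norm 1 G).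
rewrite cardD (_ : [seq _ <- _ | _] = [:: 1%N; 3]) // !inE => /orP[/eqP idx1 | /eqP //].
case/negP: notcentD; move/eqP: idx1; rewrite -(cents_card_quotient_cent (der_norm 1 G)).
by rewrite subsetI der_sub centsC.
Qed.

Lemma expg7_der_center : y ^+ 7 \in 'Z(G).
Proof.
have sYD : <[y ^+ 7]> \subset D by rewrite defD cycleX.
have nsYG : <[y ^+ 7]> <| G.
  by apply: char_normal_trans (der_normal 1 G); rewrite sub_cyclic_char.
rewrite -cycle_subG odd_cyclic_normal_center ?cycle_cyclic //.
by rewrite -orderE orderXdiv oy.
Qed.

Lemma card_der_center : #|D :&: 'Z(G)| = 3.
Proof.
have : #|D :&: 'Z(G)| \in [:: 3].
  change (#|D :&: 'Z(G)| \in [seq d <- divisors 21 | (3 %| d) && (d != 21)]).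
  rewrite mem_filter -dvdn_divisors // -cardD cardSg ?subsetIl // andbT.
  have -> : 3 = #|<[y ^+ 7]>| by rewrite -orderE orderXdiv oy.
  rewrite cardSg /=; last by rewrite subsetI defD cycleX cycle_subG expg7_der_center.
  apply: contraNneq notcentD => oDZ; apply/setIidPl/eqP.
  by rewrite eqEcard subsetIl oDZ /=.
by rewrite inE => /eqP.
Qed.

Lemma commg_cent_der_expg3 c d : c \in C -> d \in C -> [~ c, d] ^+ 3 = 1.
Proof.
move=> Cc Cd; have [Gc Gd] := (subsetP sCG c Cc, subsetP sCG d Cd).
rewrite -card_der_center expg_cardG // inE mem_commg_der //=.
by rewrite (subsetP (der1_sub_center sCG cDC)) // derg1 mem_commg.
Qed.

Let abD : abelian D := cyclic_abelian cycD.
Let nsCG : C <| G := normal_cent_der.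
Let oGC : #|G / C| = 3 := index_cent_der.

Lemma commg_cent_der_morph x : x \in G -> {in C &, {morph commg x : c d / c * d}}.
Proof.
move=> Gx; apply: (commg_morph_cent abD cDC) => c Cc.
by apply: mem_commg_der; rewrite // (subsetP sCG).
Qed.

Definition commg_cent_der x (Gx : x \in G) : {morphism C >-> gT} :=
  Morphism (commg_cent_der_morph Gx).

Lemma card_class_morphim x (Gx : x \in G) : x \notin C ->
  #|x ^: G| = #|commg_cent_der Gx @* C|.
Proof. by move=> notCx; rewrite morphimEdom (index3_card_class nsCG oGC). Qed.

Lemma commg_cent_der_sub x (Gx : x \in G) : commg_cent_der Gx @* C \subset D.
Proof.
rewrite morphimEdom; apply/subsetP=> _ /imsetP[c Cc ->].
by apply: mem_commg_der; rewrite // (subsetP sCG).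
Qed.

Lemma card_morphim_commg_cent_der x (Gx : x \in G) : x \notin C ->
  #|commg_cent_der Gx @* C| \in [:: 7; 21].
Proof.
move=> notCx; set f := commg_cent_der Gx.
have Cy : y \in C by rewrite inE (subsetP (der_sub 1 G)) //= defD cent_cycle cent1id.
have oxy : #[[~ x, y]] = 7.
  apply/(prime_nt_dvdP _ _) => //.
    rewrite order_eq1; apply: contra notCx => /commgP cxy.
    by rewrite inE Gx defD cent_cycle; apply/cent1P.
  rewrite order_dvdn -[[~ x, y]]/(f y) -morphX //=; apply/commgP.
  by case/centerP: expg7_der_center => _ /(_ x Gx)/commute_sym.
change (#|f @* C| \in [seq d <- divisors 21 | 7 %| d]).
rewrite mem_filter -dvdn_divisors // -cardD cardSg ?commg_cent_der_sub // andbT.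
by rewrite -oxy order_dvdG //; exact: (mem_morphim f Cy Cy).
Qed.

Lemma card_class_out_cent x : x \in G -> x \notin C ->
  #|x ^: G| = 7 \/ #|x ^: G| = 21.
Proof.
move=> Gx notCx; have := card_morphim_commg_cent_der Gx notCx.
by rewrite -card_class_morphim // !inE => /orP[]/eqP; [left | right].
Qed.

Lemma card_class7P x : x \in G -> x \notin C ->
  #|x ^: G| = 7 <-> {in C, forall c, [~ x, c] ^+ 7 = 1}.
Proof.
move=> Gx notCx; rewrite (card_class_morphim Gx notCx).
split=> [oS c Cc | all7]; first by rewrite -oS expg_cardG //; exact: mem_morphim.
have := card_morphim_commg_cent_der Gx notCx; rewrite !inE => /orP[/eqP // | /eqP oS].
have defS : commg_cent_der Gx @* C = D.
  by apply/eqP; rewrite eqEcard commg_cent_der_sub cardD oS /=.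
have /morphimP[c _ Cc def_y] : y \in commg_cent_der Gx @* C by rewrite defS.
have /eqP : y ^+ 7 = 1 by rewrite def_y all7.
by rewrite -order_dvdn oy.
Qed.

Lemma card_class7_mulg x d : x \in G -> x \notin C -> #|x ^: G| = 7 -> d \in C ->
  #|(x * d) ^: G| = 7 <-> d \in 'Z(C).
Proof.
move=> Gx notCx x7 Cd; have Gd := subsetP sCG d Cd.
have expg7_commg : {in C, forall c, [~ x * d, c] ^+ 7 = [~ d, c]}.
  move=> c Cc; have Gc := subsetP sCG c Cc; rewrite commMgJ.
  have Dxc : [~ x, c] \in D by rewrite mem_commg_der.
  have /conjg_fixP-> : [~ [~ x, c], d] == 1.
    by apply/commgP/commute_sym/(centsP cDC).
  rewrite expgMn; last by apply: (centsP abD); rewrite ?mem_commg_der.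
  rewrite (card_class7P Gx notCx).1 // mul1g.
  by rewrite -(expg_mod 7 (commg_cent_der_expg3 Cd Cc)).
have notCxd : x * d \notin C by rewrite groupMr.
apply: (iff_trans (card_class7P (groupM Gx Gd) notCxd)).
split=> [all7 | Zd c Cc]; last first.
  by rewrite expg7_commg //; apply/eqP/commgP; case/centerP: Zd => _; apply.
by apply/centerP; split=> // c Cc; apply/commgP; rewrite -expg7_commg ?all7.
Qed.

Let class7 := [set x in G :\: C | #|x ^: G| == 7].

Let class7P x : reflect [/\ x \in G, x \notin C & #|x ^: G| = 7] (x \in class7).
Proof.
apply: (iffP setIdP) => [[/setDP[Gx notCx] /eqP x7] | [Gx notCx x7]] //.
by rewrite in_setD notCx Gx x7.
Qed.

Lemma mem_class7 x g : x \in class7 -> x^-1 * g \in C ->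
  (g \in class7) = (x^-1 * g \in 'Z(C)).
Proof.
case/class7P=> Gx notCx x7 Cxg.
have def_g : x * (x^-1 * g) = g by rewrite mulKVg.
have iff7 := card_class7_mulg Gx notCx x7 Cxg; rewrite def_g in iff7.
have Gg : g \in G by rewrite -def_g groupM // (subsetP sCG).
have notCg : g \notin C by rewrite -def_g groupMr.
by apply/class7P/idP => [[_ _ /iff7] | /iff7].
Qed.

Lemma class7_lcosets x : x \in class7 -> class7 = x *: 'Z(C) :|: x^-1 *: 'Z(C).
Proof.
move=> Xx; have [Gx notCx x7] := class7P x Xx.
have Xx' : x^-1 \in class7 by apply/class7P; rewrite groupV classVg card_invg groupV.
have sZC : 'Z(C) \subset C := center_sub C.
apply/setP=> g; rewrite in_setU !mem_lcoset invgK.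
have [Gg | notGg] := boolP (g \in G); last first.
  have sZG := subset_trans sZC sCG.
  rewrite !(contraNF (subsetP sZG _)) ?groupMl ?groupV //.
  by apply: contraNF notGg => /class7P[].
have [Cg | Cxg | Cxg] := index3_cosets nsCG oGC Gx notCx Gg.
- rewrite !(contraNF (subsetP sZC _)) ?groupMr ?groupV //.
  by apply: contraTF Cg => /class7P[].
- rewrite (mem_class7 Xx Cxg) (contraNF (subsetP sZC (x * g))) ?orbF //.
  exact: (index3_mulg_cent nsCG oGC).
- rewrite -[x in x * g]invgK in Cxg; rewrite (mem_class7 Xx' Cxg) invgK.
  rewrite (contraNF (subsetP sZC (x^-1 * g))) //.
  by apply: (index3_mulg_cent nsCG oGC); rewrite ?groupV.
Qed.

Lemma card_class7 x : x \in class7 -> #|class7| = (2 * #|'Z(C)|)%N.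
Proof.
move=> Xx; have [Gx notCx _] := class7P x Xx.
rewrite (class7_lcosets Xx) cardsU !card_lcoset.
suff -> : x *: 'Z(C) :&: x^-1 *: 'Z(C) = set0 by rewrite cards0 subn0 addnn mul2n.
apply/setP=> g; rewrite !inE !mem_lcoset invgK; apply/negbTE/negP.
case/andP=> /(subsetP (center_sub C)) Cxg /(subsetP (center_sub C)).
exact/negP/(index3_mulg_cent nsCG oGC).
Qed.

Lemma class_size_dichotomy :
  let C := 'C_G(G^`(1)) in
  let P1 := forall x, x \in G :\: C -> #|x ^: G| = 21 in
  let P2 := exists X : {set gT},
      [/\ X \subset G :\: C,
          #|X| = (2 * #|'Z(C)|)%N,
          forall x, x \in X -> #|x ^: G| = 7 &
          forall x, x \in G :\: (C :|: X) -> #|x ^: G| = 21] in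
  (P1 /\ ~ P2) \/ (~ P1 /\ P2).
Proof.
move=> /=; have [X0 | [x Xx]] := set_0Vmem class7.
  left; split=> [x /setDP[Gx notCx] | [X [sX oX X7 _]]].
    have [x7 | //] := card_class_out_cent Gx notCx.
    suff : x \in class7 by rewrite X0 inE.
    exact/class7P.
  have /card_gt0P[x Xx] : (0 < #|X|)%N by rewrite oX muln_gt0 cardG_gt0.
  have /setDP[Gx notCx] := subsetP sX x Xx.
  suff : x \in class7 by rewrite X0 inE.
  by apply/class7P; rewrite X7.
have [Gx notCx x7] := class7P x Xx.
right; split=> [P1 | ]; first by move: x7; rewrite P1 // in_setD notCx.
exists class7; split.
- by apply/subsetP=> g /class7P[Gg notCg _]; rewrite inE notCg.
- exact: card_class7 Xx.
- by move=> g /class7P[].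
move=> g; rewrite in_setD in_setU negb_or => /andP[/andP[notCg notXg] Gg].
have [g7 | //] := card_class_out_cent Gg notCg.
by case/negP: notXg; apply/class7P.
Qed.

End DerivedCyclic21.

Theorem lemma4p1 (gT : finGroupType) (G : {group gT}) :
  odd #|G| ->
  ((cyclic (G^`(1)) /\ #|G^`(1)| = 15) -> G^`(1) \subset 'Z(G)) /\
  ((cyclic (G^`(1)) /\ #|G^`(1)| = 21) -> ~~ (G^`(1) \subset 'Z(G)) ->
    [/\ #|G / 'C_G(G^`(1))| = 3,
        #|G^`(1) :&: 'Z(G)| = 3 &
        let C := 'C_G(G^`(1)) in
        let P1 := forall x, x \in G :\: C -> #|x ^: G| = 21 in
        let P2 := exists X : {set gT},
            [/\ X \subset G :\: C,
                #|X| = (2 * #|'Z(C)|)%N,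
                forall x, x \in X -> #|x ^: G| = 7 &
                forall x, x \in G :\: (C :|: X) -> #|x ^: G| = 21] in
        (P1 /\ ~ P2) \/ (~ P1 /\ P2)]).
Proof.
move=> oddG; split=> [[cycD oD] | [cycD oD] notcentD].
  by apply: (odd_cyclic_normal_center oddG cycD (der_normal 1 G)); rewrite oD.
have [y defD] := cyclicP cycD.
have oy : #[y] = 21 by rewrite orderE -defD.
split.
- exact: index_cent_der oddG defD oy notcentD.
- exact: card_der_center oddG defD oy notcentD.
- exact: class_size_dichotomy oddG defD oy notcentD.
Qed.
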